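(* Let $X$ have a pdf $f$ satisfying Conditions (A) and (B) below. For $\delta>0$ let $D=D(Q_{\mathrm{uni}}^\delta)$ be the mean-squared distortion of the uniform quantizer with cell size $\delta$. Then $$\lim_{\delta\to0}\frac{\mathrm{AoI}(S_{\mathrm z},Q_{\mathrm{uni}}^\delta,F^* )}{\log_2 D}=-\frac34$$ and $$\lim_{\delta\to0}\Big[\mathrm{AoI}(S_{\mathrm z},Q_{\mathrm{uni}}^\delta,F^* )+\tfrac32\log_2\delta\Big]=\tfrac32 h(X).$$
   Context: Let $X$ be a real random variable with pdf $f$. Condition (A): $f$ is continuous and differentiable, and its support is a bounded interval $I$. Condition (B): the integrals $\int_I f(x)\log_2^2 f(x)\,dx$ and the differential entropy $h(X)=-\int_I f(x)\log_2 f(x)\,dx$ exist and are finite. Quantizers. A quantizer $Q$ partitions $I$ into intervals $[a_{i-1},a_i]$ with representation points $c_i$. Write $p_i=P(X\in[a_{i-1},a_i])$. The mean-squared distortion is $D(Q)=\sum_i\int_{a_{i-1}}^{a_i}(x-c_i)^2f(x)\,dx$. The uniform quantizer $Q_{\mathrm{uni}}^\delta$ partitions $I$ into consecutive cells of length $\delta$, with representation points at the cell midpoints. Codes. A real-valued code assigns lengths $l_i\in\mathbb R^+$ to the cells, subject to $\sum_i2^{-l_i}\le1$. The random codeword length is $L=l_i$ when $X$ is in cell $i$. Objective. Under the zero-wait sampling policy $S_{\mathrm z}$, the AoI of a code $l$ is $\mathrm{AoI}(S_{\mathrm z},Q,l)=\frac{E[L^2]}{2E[L]}+E[L]$. We write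 $\mathrm{AoI}(S_{\mathrm z},Q,F^* )=\inf_l\mathrm{AoI}(S_{\mathrm z},Q,l)$, the infimum over real-valued codes; this is the value of the real-valued AoI-optimal code $F^*$. *)

From Stdlib Require Import Reals List.
From Coquelicot Require Import Coquelicot.
Open Scope R_scope.

Definition log2 (x : R) : R := ln x / ln 2.

Definition fsum (N : nat) (g : nat -> R) : R :=
  fold_right Rplus 0 (map g (seq 0 N)).

Definition is_pdf_with_support (f : R -> R) (a b : R) : Prop :=
  a < b /\
  (forall x, 0 <= f x) /\
  (forall x, (x < a \/ b < x) -> f x = 0) /\
  ex_RInt f a b /\ RInt f a b = 1 /\
  (* every point of [a,b] is a limit of points where f > 0, i.e. the support
     (closure of {f > 0}) is exactly [a,b] *)
  (forall x, a <= x <= b -> forall eps, 0 < eps ->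
     exists y, Rabs (y - x) < eps /\ 0 < f y).

Definition condition_A (f : R -> R) (a b : R) : Prop :=
  (forall x, a <= x <= b ->
     filterlim f (within (fun y => a <= y <= b) (locally x)) (locally (f x))) /\
  (forall x, a < x < b -> ex_derive f x).

(* Condition (B): the integrals of f log2^2 f and f log2 f over I exist
   (finite).  Convention 0 log 0 = 0 holds since Stdlib's ln 0 = 0. *)
Definition condition_B (f : R -> R) (a b : R) : Prop :=
  ex_RInt (fun x => f x * (log2 (f x)) ^ 2) a b /\
  ex_RInt (fun x => f x * log2 (f x)) a b.

Definition diff_entropy (f : R -> R) (a b : R) : R :=
  - RInt (fun x => f x * log2 (f x)) a b.

(* number of cells = ceil((b-a)/delta) *)
Definition ncells (a b delta : R) : nat :=
  Z.to_nat (- Int_part (- ((b - a) / delta))).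
Definition cell_lo (a delta : R) (i : nat) : R := a + INR i * delta.
Definition cell_hi (a b delta : R) (i : nat) : R := Rmin (a + INR (S i) * delta) b.
Definition cell_mid (a b delta : R) (i : nat) : R :=
  (cell_lo a delta i + cell_hi a b delta i) / 2.

Definition uni_prob (f : R -> R) (a b delta : R) (i : nat) : R :=
  RInt f (cell_lo a delta i) (cell_hi a b delta i).

Definition uni_distortion (f : R -> R) (a b delta : R) : R :=
  fsum (ncells a b delta) (fun i =>
    RInt (fun x => (x - cell_mid a b delta i) ^ 2 * f x)
         (cell_lo a delta i) (cell_hi a b delta i)).

Definition real_code (N : nat) (l : nat -> R) : Prop :=
  (forall i, (i < N)%nat -> 0 < l i) /\
  fsum N (fun i => Rpower 2 (- l i)) <= 1.

Definition AoI_zw (N : nat) (p l : nat -> R) : R :=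
  let EL := fsum N (fun i => p i * l i) in
  let EL2 := fsum N (fun i => p i * (l i) ^ 2) in
  EL2 / (2 * EL) + EL.

(* AoI(S_z, Q, F-star) = infimum over real-valued codes *)
Definition AoI_opt (N : nat) (p : nat -> R) : R :=
  real (Glb_Rbar (fun v => exists l, real_code N l /\ v = AoI_zw N p l)).

Definition AoI_uni_opt (f : R -> R) (a b delta : R) : R :=
  AoI_opt (ncells a b delta) (uni_prob f a b delta).

From Stdlib Require Import Reals Lra Lia List ZArith.
From Coquelicot Require Import Coquelicot.
Open Scope R_scope.

(* For a probability vector [p], Gibbs' inequality and [E[L^2] >= E[L]^2] give
   [AoI >= 3/2 H(p)] for every real code, while the Shannon code [l_i = - log2 p_i] achieves
   [3/2 H(p) + Var(log2 p) / (2 H(p))].  For the uniform quantizer with cell size [d],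
   [H(p) = - log2 d - A(d)] where [A(d) = sum_i p_i log2 (p_i / d)] is a Riemann sum of
   [f log2 f], so [A(d) -> - h(X)], while the second moment of [log2 (p_i / d)] stays bounded.
   As [H(p) -> +oo] the variance term vanishes, which gives the second limit.  The distortion
   lies between [d^2 / 32] and [d^2 / 4], so [log2 D = 2 log2 d + O(1)] and the first limit
   follows from the second. *)

Lemma fold_right_Rplus_init (l : list R) c :
  fold_right Rplus c l = fold_right Rplus 0 l + c.
Proof. induction l as [|x l IH]; simpl; [ring | rewrite IH; ring]. Qed.

Lemma fsum_S n g : fsum (S n) g = fsum n g + g n.
Proof.
  unfold fsum. rewrite seq_S, map_app, fold_right_app. simpl.
  rewrite fold_right_Rplus_init. ring.
Qed.

Lemma fsum_ext n g h : (forall i, (i < n)%nat -> g i = h i) -> fsum n g = fsum n h.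
Proof.
  induction n as [|n IH]; intros E; [reflexivity|].
  rewrite !fsum_S, IH by (intros; apply E; lia). rewrite E by lia. reflexivity.
Qed.

Lemma fsum_plus n g h : fsum n (fun i => g i + h i) = fsum n g + fsum n h.
Proof. induction n as [|n IH]; [unfold fsum; simpl; ring|]. rewrite !fsum_S, IH. ring. Qed.

Lemma fsum_scal n c g : fsum n (fun i => c * g i) = c * fsum n g.
Proof. induction n as [|n IH]; [unfold fsum; simpl; ring|]. rewrite !fsum_S, IH. ring. Qed.

Lemma fsum_opp n g : fsum n (fun i => - g i) = - fsum n g.
Proof. induction n as [|n IH]; [unfold fsum; simpl; ring|]. rewrite !fsum_S, IH. ring. Qed.

Lemma fsum_minus n g h : fsum n (fun i => g i - h i) = fsum n g - fsum n h.
Proof.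
  unfold Rminus. rewrite fsum_plus, <- fsum_opp. reflexivity.
Qed.

Lemma fsum_const n c : fsum n (fun _ => c) = INR n * c.
Proof. induction n as [|n IH]; [unfold fsum; simpl; ring|]. rewrite fsum_S, IH, S_INR. ring. Qed.

Lemma fsum_le n g h : (forall i, (i < n)%nat -> g i <= h i) -> fsum n g <= fsum n h.
Proof.
  induction n as [|n IH]; intros E; [unfold fsum; simpl; lra|].
  rewrite !fsum_S. assert (fsum n g <= fsum n h) by (apply IH; intros; apply E; lia).
  assert (g n <= h n) by (apply E; lia). lra.
Qed.

Lemma fsum_nonneg n g : (forall i, (i < n)%nat -> 0 <= g i) -> 0 <= fsum n g.
Proof.
  intros E. replace 0 with (fsum n (fun _ => 0)) by (rewrite fsum_const; ring).
  apply fsum_le; auto.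
Qed.

Lemma fsum_pos n g : (0 < n)%nat -> (forall i, (i < n)%nat -> 0 < g i) -> 0 < fsum n g.
Proof.
  intros Hn E. destruct n as [|n]; [lia|]. rewrite fsum_S.
  assert (0 <= fsum n g) by (apply fsum_nonneg; intros; left; apply E; lia).
  assert (0 < g n) by (apply E; lia). lra.
Qed.

Lemma fsum_abs n g : Rabs (fsum n g) <= fsum n (fun i => Rabs (g i)).
Proof.
  induction n as [|n IH]; [unfold fsum; simpl; rewrite Rabs_R0; lra|].
  rewrite !fsum_S. eapply Rle_trans; [apply Rabs_triang | lra].
Qed.

Lemma fsum_term_le n g i :
  (forall k, (k < n)%nat -> 0 <= g k) -> (i < n)%nat -> g i <= fsum n g.
Proof.
  induction n as [|n IH]; intros E Hi; [lia|]. rewrite fsum_S.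
  assert (0 <= g n) by (apply E; lia).
  destruct (Nat.eq_dec i n) as [->|Hne].
  - assert (0 <= fsum n g) by (apply fsum_nonneg; intros; apply E; lia). lra.
  - assert (g i <= fsum n g) by (apply IH; [intros; apply E | ]; lia). lra.
Qed.

Lemma fsum_two_terms_le n g i j : (forall k, (k < n)%nat -> 0 <= g k) ->
  (i < n)%nat -> (j < n)%nat -> i <> j -> g i + g j <= fsum n g.
Proof.
  induction n as [|n IH]; intros E Hi Hj Hij; [lia|]. rewrite fsum_S.
  assert (E' : forall k, (k < n)%nat -> 0 <= g k) by (intros; apply E; lia).
  destruct (Nat.eq_dec i n) as [->|Hi'].
  - assert (g j <= fsum n g) by (apply fsum_term_le; auto; lia). lra.
  - destruct (Nat.eq_dec j n) as [->|Hj'].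
    + assert (g i <= fsum n g) by (apply fsum_term_le; auto; lia). lra.
    + assert (g i + g j <= fsum n g) by (apply IH; auto; lia).
      assert (0 <= g n) by (apply E; lia). lra.
Qed.

Lemma ln_le_sub_1 x : 0 < x -> ln x <= x - 1.
Proof. intros Hx. pose proof (exp_ineq1_le (ln x)). rewrite exp_ln in H; lra. Qed.

Lemma ln2_pos : 0 < ln 2.
Proof. rewrite <- ln_1. apply ln_increasing; lra. Qed.

Lemma log2_1 : log2 1 = 0.
Proof. unfold log2. rewrite ln_1. unfold Rdiv. ring. Qed.

Lemma log2_lt x y : 0 < x -> x < y -> log2 x < log2 y.
Proof.
  intros. unfold log2, Rdiv. apply Rmult_lt_compat_r.
  - apply Rinv_0_lt_compat, ln2_pos.
  - apply ln_increasing; auto.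
Qed.

Lemma log2_le x y : 0 < x -> x <= y -> log2 x <= log2 y.
Proof. intros Hx [H|<-]; [left; apply log2_lt | right]; auto. Qed.

Lemma log2_mult x y : 0 < x -> 0 < y -> log2 (x * y) = log2 x + log2 y.
Proof. intros. unfold log2. rewrite ln_mult by auto. unfold Rdiv. ring. Qed.

Lemma log2_Rpower x : log2 (Rpower 2 x) = x.
Proof. unfold log2. rewrite ln_Rpower. pose proof ln2_pos. field. lra. Qed.

Lemma Rpower_log2 x : 0 < x -> Rpower 2 (log2 x) = x.
Proof.
  intros Hx. unfold Rpower, log2. pose proof ln2_pos.
  replace (ln x / ln 2 * ln 2) with (ln x) by (field; lra). apply exp_ln; auto.
Qed.

Lemma log2_sq_div_pow2 d k : 0 < d -> log2 (d ^ 2 / 2 ^ k) = 2 * log2 d - INR k.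
Proof.
  intros Hd. pose proof ln2_pos. unfold log2, Rdiv.
  rewrite ln_mult, ln_Rinv, !ln_pow; try apply Rinv_0_lt_compat; try apply pow_lt; try lra.
  simpl (INR 2). field. lra.
Qed.

Lemma glb_bounds (E : R -> Prop) m v0 :
  E v0 -> (forall v, E v -> m <= v) -> m <= real (Glb_Rbar E) <= v0.
Proof.
  intros H0 Hlb. destruct (Glb_Rbar_correct E) as [Hl Hg].
  assert (A : Rbar_le (Glb_Rbar E) v0) by (apply Hl; auto).
  assert (B : Rbar_le m (Glb_Rbar E)) by (apply Hg; intros v Hv; apply Hlb; auto).
  destruct (Glb_Rbar E); simpl in *; try contradiction; lra.
Qed.

Definition entropy2 (N : nat) (p : nat -> R) : R := - fsum N (fun i => p i * log2 (p i)).

Definition info_moment2 (N : nat) (p : nat -> R) : R := fsum N (fun i => p i * log2 (p i) ^ 2).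

Definition shannon_code (p : nat -> R) (i : nat) : R := - log2 (p i).

Lemma gibbs_term p l : 0 < p -> (p - Rpower 2 (- l)) / ln 2 <= p * l + p * log2 p.
Proof.
  intros Hp. pose proof ln2_pos. assert (Hr : 0 < Rpower 2 (- l)) by apply exp_pos.
  pose proof (ln_le_sub_1 (Rpower 2 (- l) / p) (Rdiv_lt_0_compat _ _ Hr Hp)) as Hln.
  rewrite ln_div, ln_Rpower in Hln by auto.
  apply Rmult_le_compat_l with (r := p) in Hln; [|lra].
  apply Rmult_le_reg_r with (ln 2); auto. unfold log2.
  replace ((p * l + p * (ln p / ln 2)) * ln 2) with (- (p * (- l * ln 2 - ln p))) by (field; lra).
  replace (p * (Rpower 2 (- l) / p - 1)) with (Rpower 2 (- l) - p) in Hln by (field; lra).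
  replace ((p - Rpower 2 (- l)) / ln 2 * ln 2) with (p - Rpower 2 (- l)) by (field; lra).
  lra.
Qed.

(* [p i / d] is the mean density on a quantizer cell of length [d]. *)
Definition log_density_mean (N : nat) (p : nat -> R) (d : R) : R :=
  fsum N (fun i => p i * log2 (p i / d)).

Definition log_density_moment2 (N : nat) (p : nat -> R) (d : R) : R :=
  fsum N (fun i => p i * log2 (p i / d) ^ 2).

Section Codes.
Variables (N : nat) (p : nat -> R).
Hypotheses (HN : (2 <= N)%nat) (Hp : forall i, (i < N)%nat -> 0 < p i) (Hs : fsum N p = 1).

Let Hp0 : forall i, (i < N)%nat -> 0 <= p i.
Proof. intros; left; auto. Qed.

Lemma prob_lt_1 i : (i < N)%nat -> p i < 1.
Proof.
  intros Hi. set (j := if Nat.eq_dec i 0 then 1%nat else 0%nat).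
  assert (Hj : (j < N)%nat) by (unfold j; destruct Nat.eq_dec; lia).
  assert (Hij : i <> j) by (unfold j; destruct Nat.eq_dec; lia).
  pose proof (fsum_two_terms_le N p i j Hp0 Hi Hj Hij). pose proof (Hp j Hj). lra.
Qed.

Lemma log2_prob_neg i : (i < N)%nat -> log2 (p i) < 0.
Proof. intros Hi. rewrite <- log2_1. apply log2_lt; [apply Hp | apply prob_lt_1]; auto. Qed.

Lemma entropy2_pos : 0 < entropy2 N p.
Proof.
  unfold entropy2. rewrite <- fsum_opp. apply fsum_pos; [lia|]. intros i Hi.
  pose proof (log2_prob_neg i Hi). pose proof (Hp i Hi). nra.
Qed.

Lemma entropy2_le_mean_length l : real_code N l -> entropy2 N p <= fsum N (fun i => p i * l i).
Proof.
  intros [_ Hkraft]. pose proof ln2_pos.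
  assert (0 <= fsum N (fun i => (p i - Rpower 2 (- l i)) / ln 2)).
  { unfold Rdiv. rewrite (fsum_ext N _ (fun i => / ln 2 * (p i + - Rpower 2 (- l i)))) by (intros; ring).
    rewrite fsum_scal, fsum_plus, fsum_opp, Hs.
    apply Rmult_le_pos; [left; apply Rinv_0_lt_compat|]; lra. }
  assert (fsum N (fun i => (p i - Rpower 2 (- l i)) / ln 2)
          <= fsum N (fun i => p i * l i + p i * log2 (p i))).
  { apply fsum_le. intros i Hi. apply gibbs_term, Hp, Hi. }
  rewrite fsum_plus in H1. unfold entropy2. lra.
Qed.

Lemma mean_sq_le_moment2 l : fsum N (fun i => p i * l i) ^ 2 <= fsum N (fun i => p i * l i ^ 2).
Proof.
  set (m := fsum N (fun i => p i * l i)).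
  assert (Hvar : 0 <= fsum N (fun i => p i * (l i - m) ^ 2)).
  { apply fsum_nonneg. intros i Hi. apply Rmult_le_pos; [apply Hp0; auto | apply pow2_ge_0]. }
  replace (fsum N (fun i => p i * (l i - m) ^ 2)) with
    (fsum N (fun i => p i * l i ^ 2) + (-2 * m) * fsum N (fun i => p i * l i) + m ^ 2 * fsum N p)
    in Hvar.
  - rewrite Hs in Hvar. fold m in Hvar. lra.
  - rewrite <- !fsum_scal, <- !fsum_plus. apply fsum_ext; intros; ring.
Qed.

Lemma AoI_zw_ge l : real_code N l -> 3 / 2 * entropy2 N p <= AoI_zw N p l.
Proof.
  intros Hl. pose proof (entropy2_le_mean_length l Hl) as Hgibbs.
  pose proof (mean_sq_le_moment2 l) as Hmom. unfold AoI_zw. cbv zeta.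
  set (EL := fsum N (fun i => p i * l i)) in *.
  assert (HEL : 0 < EL).
  { apply fsum_pos; [lia|]. intros i Hi. pose proof (proj1 Hl i Hi). pose proof (Hp i Hi). nra. }
  apply Rle_trans with (EL ^ 2 / (2 * EL) + EL).
  - replace (EL ^ 2 / (2 * EL)) with (EL / 2) by (field; lra). lra.
  - apply Rplus_le_compat_r, Rmult_le_compat_r; [left; apply Rinv_0_lt_compat|]; lra.
Qed.

Lemma shannon_code_real : real_code N (shannon_code p).
Proof.
  split.
  - intros i Hi. pose proof (log2_prob_neg i Hi). unfold shannon_code. lra.
  - rewrite (fsum_ext _ _ p); [lra|]. intros i Hi. unfold shannon_code.
    rewrite Ropp_involutive. apply Rpower_log2, Hp, Hi.
Qed.

Lemma AoI_zw_shannon :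
  AoI_zw N p (shannon_code p) = info_moment2 N p / (2 * entropy2 N p) + entropy2 N p.
Proof.
  unfold AoI_zw, shannon_code. cbv zeta.
  assert (E1 : fsum N (fun i => p i * - log2 (p i)) = entropy2 N p).
  { unfold entropy2. rewrite <- fsum_opp. apply fsum_ext; intros; ring. }
  assert (E2 : fsum N (fun i => p i * (- log2 (p i)) ^ 2) = info_moment2 N p).
  { apply fsum_ext; intros; ring. }
  rewrite E1, E2. reflexivity.
Qed.

Lemma AoI_opt_bounds : 3 / 2 * entropy2 N p <= AoI_opt N p
  <= info_moment2 N p / (2 * entropy2 N p) + entropy2 N p.
Proof.
  rewrite <- AoI_zw_shannon. apply glb_bounds.
  - exists (shannon_code p). split; [apply shannon_code_real | reflexivity].
  - intros v [l [Hl ->]]. apply AoI_zw_ge, Hl.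
Qed.

Section Rescaling.
Variables (d : R).
Hypothesis Hd : 0 < d.

Let log2_prob_split i : (i < N)%nat -> log2 (p i) = log2 d + log2 (p i / d).
Proof.
  intros Hi. rewrite <- log2_mult by (auto; apply Rdiv_lt_0_compat; auto).
  f_equal. field. lra.
Qed.

Lemma entropy2_rescale : entropy2 N p = - log2 d - log_density_mean N p d.
Proof.
  unfold entropy2, log_density_mean.
  rewrite (fsum_ext N _ (fun i => log2 d * p i + p i * log2 (p i / d))).
  - rewrite fsum_plus, fsum_scal, Hs. ring.
  - intros i Hi. rewrite log2_prob_split by auto. ring.
Qed.

Lemma info_moment2_rescale : info_moment2 N p =
  entropy2 N p ^ 2 + log_density_moment2 N p d - log_density_mean N p d ^ 2.
Proof.
  rewrite entropy2_rescale. unfold info_moment2, log_density_moment2, log_density_mean.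
  rewrite (fsum_ext N _ (fun i => log2 d ^ 2 * p i
    + (2 * log2 d * (p i * log2 (p i / d)) + p i * log2 (p i / d) ^ 2))).
  - rewrite !fsum_plus, !fsum_scal, Hs. ring.
  - intros i Hi. rewrite log2_prob_split by auto. ring.
Qed.

Lemma AoI_opt_rescaled_bounds :
  0 <= AoI_opt N p + 3 / 2 * log2 d + 3 / 2 * log_density_mean N p d
    <= log_density_moment2 N p d / (2 * entropy2 N p).
Proof.
  destruct AoI_opt_bounds as [Hlo Hhi]. pose proof entropy2_pos as HH.
  pose proof entropy2_rescale as HHe. rewrite info_moment2_rescale in Hhi.
  set (H := entropy2 N p) in *. set (A := log_density_mean N p d) in *.
  set (B := log_density_moment2 N p d) in *.
  replace ((H ^ 2 + B - A ^ 2) / (2 * H) + H) with (3 / 2 * H + B / (2 * H) - A ^ 2 / (2 * H))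
    in Hhi by (field; lra).
  assert (0 <= A ^ 2 / (2 * H)) by (apply Rle_mult_inv_pos; [apply pow2_ge_0 | lra]).
  split; lra.
Qed.

End Rescaling.
End Codes.

Section Cells.
Variables a b d : R.
Hypothesis Hd : 0 < d < b - a.

Lemma ncells_spec : (2 <= ncells a b d)%nat /\
  a + (INR (ncells a b d) - 1) * d < b /\ b <= a + INR (ncells a b d) * d.
Proof.
  set (t := (b - a) / d).
  assert (Ht : 1 < t).
  { unfold t. apply Rmult_lt_reg_r with d; [lra|]. unfold Rdiv. rewrite Rmult_assoc, Rinv_l; lra. }
  assert (Htd : t * d = b - a) by (unfold t; field; lra).
  unfold ncells. fold t. destruct (base_Int_part (- t)) as [H1 H2].
  set (z := (- Int_part (- t))%Z).
  assert (Hz : IZR z = - IZR (Int_part (- t))) by (unfold z; rewrite opp_IZR; reflexivity).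
  assert (Hz2 : (2 <= z)%Z) by (assert (1 < IZR z) by lra; apply lt_IZR in H; lia).
  assert (HN : INR (Z.to_nat z) = IZR z) by (rewrite INR_IZR_INZ, Z2Nat.id; [reflexivity | lia]).
  split; [lia|]. rewrite HN. split; nra.
Qed.

Lemma cell_hi_inner i : (S i < ncells a b d)%nat -> cell_hi a b d i = cell_lo a d i + d.
Proof.
  intros Hi. destruct ncells_spec as [_ [H1 _]].
  assert (INR (S i) <= INR (ncells a b d) - 1).
  { apply le_INR in Hi. rewrite S_INR in Hi. lra. }
  unfold cell_hi, cell_lo. rewrite Rmin_left by nra. rewrite S_INR. ring.
Qed.

Lemma cell_hi_last n : ncells a b d = S n -> cell_hi a b d n = b.
Proof.
  intros Hn. destruct ncells_spec as [_ [_ H2]].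
  unfold cell_hi. apply Rmin_right. rewrite Hn in H2. lra.
Qed.

Lemma cell_bounds i : (i < ncells a b d)%nat ->
  a <= cell_lo a d i < cell_hi a b d i /\ cell_hi a b d i <= b /\
  cell_hi a b d i - cell_lo a d i <= d.
Proof.
  intros Hi. destruct ncells_spec as [_ [H1 H2]]. pose proof (pos_INR i).
  assert (INR i <= INR (ncells a b d) - 1) by (apply le_INR in Hi; rewrite S_INR in Hi; lra).
  unfold cell_lo, cell_hi. rewrite S_INR.
  pose proof (Rmin_l (a + (INR i + 1) * d) b). pose proof (Rmin_r (a + (INR i + 1) * d) b).
  repeat split; try nra. apply Rmin_glb_lt; nra.
Qed.

Lemma RInt_cells (g : R -> R) : (forall u v, ex_RInt g u v) ->
  fsum (ncells a b d) (fun i => RInt g (cell_lo a d i) (cell_hi a b d i)) = RInt g a b.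
Proof.
  intros Hex. destruct ncells_spec as [HN _].
  destruct (ncells a b d) as [|n] eqn:E; [lia|].
  rewrite fsum_S, (cell_hi_last n E).
  rewrite (fsum_ext n _ (fun i => RInt g (cell_lo a d i) (cell_lo a d (S i)))).
  2:{ intros i Hi. rewrite cell_hi_inner by lia. unfold cell_lo. rewrite S_INR. f_equal. ring. }
  assert (Htel : forall k, fsum k (fun i => RInt g (cell_lo a d i) (cell_lo a d (S i)))
                           = RInt g a (cell_lo a d k)).
  { induction k as [|k IH].
    - unfold cell_lo. simpl. rewrite Rmult_0_l, Rplus_0_r, RInt_point. reflexivity.
    - rewrite fsum_S, IH. exact (RInt_Chasles g _ _ _ (Hex _ _) (Hex _ _)). }
  rewrite Htel. exact (RInt_Chasles g _ _ _ (Hex _ _) (Hex _ _)).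
Qed.

Lemma RInt_cell_ext (g h : R -> R) i : (i < ncells a b d)%nat ->
  (forall x, a <= x <= b -> g x = h x) ->
  RInt g (cell_lo a d i) (cell_hi a b d i) = RInt h (cell_lo a d i) (cell_hi a b d i).
Proof.
  intros Hi Hgh. destruct (cell_bounds i Hi) as [[H1 H2] [H3 H4]].
  apply RInt_ext. rewrite Rmin_left, Rmax_right by lra. intros x Hx. apply Hgh. lra.
Qed.

End Cells.

Definition xlnx (x : R) : R := x * ln x.

Lemma x_ln_sq_le_4 u : 0 < u <= 1 -> u * ln u ^ 2 <= 4.
Proof.
  intros Hu. set (t := - ln u).
  assert (Ht : 0 <= t).
  { unfold t. pose proof (ln_le u 1 (proj1 Hu) (proj2 Hu)). rewrite ln_1 in H. lra. }
  assert (Hu' : u = / exp t) by (unfold t; rewrite exp_Ropp, exp_ln by lra; field; lra).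
  assert (Hsq : t * t <= 4 * exp t).
  { pose proof (exp_ineq1_le (t / 2)) as Hh.
    replace (exp t) with (exp (t / 2) * exp (t / 2)) by (rewrite <- exp_plus; f_equal; field).
    nra. }
  pose proof (exp_pos t).
  replace (ln u ^ 2) with (t * t) by (unfold t; ring). rewrite Hu'.
  apply Rmult_le_reg_l with (exp t); auto. field_simplify; lra.
Qed.

Lemma x_ln_sq_le u K : 0 < u <= K -> 1 <= K -> u * ln u ^ 2 <= 4 + K ^ 3.
Proof.
  intros Hu HK. destruct (Rle_dec u 1).
  - pose proof (x_ln_sq_le_4 u (conj (proj1 Hu) r)). nra.
  - assert (0 <= ln u) by (rewrite <- ln_1; apply ln_le; lra).
    pose proof (ln_le_sub_1 u (proj1 Hu)).
    assert (u * ln u ^ 2 <= u * (u * u)) by (apply Rmult_le_compat_l; nra).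
    assert (u * (u * u) <= K ^ 3) by (assert (u * u <= K * K) by nra; simpl; nra).
    lra.
Qed.

Lemma Rabs_xlnx_le u K : 0 <= u <= K -> 1 <= K -> Rabs (xlnx u) <= 1 + K ^ 2.
Proof.
  intros Hu HK. unfold xlnx. destruct (Req_dec u 0) as [->|Hne].
  { rewrite Rmult_0_l, Rabs_R0. nra. }
  destruct (Rle_dec u 1).
  - assert (ln u <= 0) by (rewrite <- ln_1; apply ln_le; lra).
    pose proof (ln_le_sub_1 (/ u) ltac:(apply Rinv_0_lt_compat; lra)).
    rewrite ln_Rinv in H0 by lra. rewrite Rabs_left1 by nra.
    assert (u * - ln u <= u * (/ u - 1)) by (apply Rmult_le_compat_l; lra).
    replace (u * (/ u - 1)) with (1 - u) in H1 by (field; lra). nra.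
  - assert (0 <= ln u) by (rewrite <- ln_1; apply ln_le; lra).
    pose proof (ln_le_sub_1 u ltac:(lra)). rewrite Rabs_pos_eq by nra. nra.
Qed.

Lemma continuous_xlnx_comp (g : R -> R) x : (forall y, 0 <= g y) -> continuous g x ->
  continuous (fun y => xlnx (g y)) x.
Proof.
  intros Hg0 Hg. destruct (Rlt_dec 0 (g x)) as [Hp|Hn].
  - apply (continuous_comp g xlnx); auto.
    apply (continuous_mult (fun y => y) ln); [apply continuous_id | apply continuous_ln; auto].
  - assert (H0 : g x = 0) by (pose proof (Hg0 x); lra).
    apply filterlim_locally. intros eps.
    assert (Hr : 0 < Rmin 1 (eps * eps / 4)).
    { apply Rmin_glb_lt; [lra|]. pose proof (cond_pos eps). nra. }
    eapply filter_imp; [|exact (proj1 (filterlim_locally g (g x)) Hg (mkposreal _ Hr))].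
    intros y Hy. change (Rabs (g y - g x) < Rmin 1 (eps * eps / 4)) in Hy.
    change (Rabs (xlnx (g y) - xlnx (g x)) < eps).
    rewrite H0 in *. unfold xlnx at 2. rewrite Rmult_0_l, Rminus_0_r.
    rewrite Rminus_0_r, Rabs_pos_eq in Hy by apply Hg0.
    pose proof (Rmin_l 1 (eps * eps / 4)). pose proof (Rmin_r 1 (eps * eps / 4)).
    pose proof (Hg0 y). pose proof (cond_pos eps).
    (* [|u ln u| <= 2 sqrt u] gives continuity where [g] vanishes. *)
    assert (Hsq : xlnx (g y) ^ 2 <= 4 * g y).
    { unfold xlnx. destruct (Req_dec (g y) 0) as [->|]; [lra|].
      pose proof (x_ln_sq_le_4 (g y) ltac:(lra)). nra. }
    apply Rabs_def1; nra.
Qed.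

Lemma ex_RInt_cont (g : R -> R) u v : (forall x, continuous g x) -> ex_RInt g u v.
Proof. intros Hg. apply (@ex_RInt_continuous R_CompleteNormedModule). intros; apply Hg. Qed.

Lemma RInt_const_R c u v : RInt (fun _ => c) u v = (v - u) * c.
Proof. rewrite RInt_const. reflexivity. Qed.

Lemma RInt_scal_R (g : R -> R) c u v : ex_RInt g u v ->
  RInt (fun x => c * g x) u v = c * RInt g u v.
Proof. apply (RInt_scal (V := R_CompleteNormedModule)). Qed.

Lemma RInt_mean_value (g : R -> R) lo hi : (forall x, continuous g x) -> lo < hi ->
  exists xi, lo <= xi <= hi /\ RInt g lo hi = (hi - lo) * g xi.
Proof.
  intros Hg Hlh.
  assert (Hc : forall x, continuity_pt g x) by (intros; apply continuity_pt_filterlim, Hg).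
  destruct (continuity_ab_min g lo hi ltac:(lra) (fun c _ => Hc c)) as [xm [Hm Hxm]].
  destruct (continuity_ab_maj g lo hi ltac:(lra) (fun c _ => Hc c)) as [xM [HM HxM]].
  set (y := RInt g lo hi / (hi - lo)).
  assert (Hy : RInt g lo hi = (hi - lo) * y).
  { unfold y, Rdiv. rewrite Rmult_comm, Rmult_assoc, Rinv_l, Rmult_1_r by lra. reflexivity. }
  assert (Hlo : g xm <= y).
  { apply Rmult_le_reg_l with (hi - lo); [lra|]. rewrite <- Hy, <- RInt_const_R.
    apply RInt_le; [lra | apply ex_RInt_const | apply ex_RInt_cont; auto |].
    intros; apply Hm; lra. }
  assert (Hhi : y <= g xM).
  { apply Rmult_le_reg_l with (hi - lo); [lra|]. rewrite <- Hy, <- RInt_const_R.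
    apply RInt_le; [lra | apply ex_RInt_cont; auto | apply ex_RInt_const |].
    intros; apply HM; lra. }
  destruct (IVT_gen g xm xM y Hc) as [xi [Hxi Heq]].
  { split; [eapply Rle_trans; [apply Rmin_l | auto] | eapply Rle_trans; [eauto | apply Rmax_r]]. }
  exists xi. split; [|rewrite Heq; exact Hy].
  assert (lo <= Rmin xm xM) by (apply Rmin_glb; lra).
  assert (Rmax xm xM <= hi) by (apply Rmax_lub; lra). lra.
Qed.

Lemma RInt_pos_of_pos_point (g : R -> R) lo hi y : (forall x, continuous g x) ->
  (forall x, 0 <= g x) -> lo < y < hi -> 0 < g y -> 0 < RInt g lo hi.
Proof.
  intros Hc Hn Hy Hgy.
  assert (He : 0 < g y / 2) by lra.
  destruct (proj1 (filterlim_locally g (g y)) (Hc y) (mkposreal _ He)) as [rho Hrho].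
  pose proof (cond_pos rho).
  pose proof (Rmax_r lo (y - rho / 2)). pose proof (Rmin_r hi (y + rho / 2)).
  set (c := Rmax lo (y - rho / 2)) in *. set (d := Rmin hi (y + rho / 2)) in *.
  assert (lo <= c < y) by (split; [apply Rmax_l | apply Rmax_lub_lt; lra]).
  assert (y < d <= hi) by (split; [apply Rmin_glb_lt; lra | apply Rmin_l]).
  assert (Hex : forall u v, ex_RInt g u v) by (intros; apply ex_RInt_cont, Hc).
  rewrite <- (RInt_Chasles g lo c hi), <- (RInt_Chasles g c d hi) by auto.
  assert (0 <= RInt g lo c) by (apply RInt_ge_0; auto; lra).
  assert (0 <= RInt g d hi) by (apply RInt_ge_0; auto; lra).
  assert (0 < RInt g c d).
  { apply RInt_gt_0; [lra | | intros; apply Hc]. intros x Hx.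
    assert (Hxy : ball y rho x).
    { change (Rabs (x - y) < rho). apply Rabs_def1; lra. }
    specialize (Hrho x Hxy). change (Rabs (g x - g y) < g y / 2) in Hrho.
    apply Rabs_def2 in Hrho. lra. }
  change (0 < RInt g lo c + (RInt g c d + RInt g d hi)). lra.
Qed.

Lemma continuous_sq_shift m x : continuous (fun x => (x - m) ^ 2) x.
Proof. apply (ex_derive_continuous (fun x => (x - m) ^ 2)). auto_derive. auto. Qed.

Lemma continuous_sq_shift_mult (g : R -> R) m x : continuous g x ->
  continuous (fun x => (x - m) ^ 2 * g x) x.
Proof. intros. apply (continuous_mult (fun x => (x - m) ^ 2) g); auto. apply continuous_sq_shift. Qed.

Lemma RInt_sq_shift m u v : RInt (fun x => (x - m) ^ 2) u v = ((v - m) ^ 3 - (u - m) ^ 3) / 3.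
Proof.
  apply is_RInt_unique.
  replace (((v - m) ^ 3 - (u - m) ^ 3) / 3)
    with (minus ((fun x => (x - m) ^ 3 / 3) v) ((fun x => (x - m) ^ 3 / 3) u))
    by (unfold minus, plus, opp; simpl; field).
  apply (is_RInt_derive (fun x => (x - m) ^ 3 / 3)).
  - intros x _. auto_derive; [auto | field].
  - intros x _. apply continuous_sq_shift.
Qed.

Lemma continuous_unif_modulus (g : R -> R) lo hi e : (forall x, continuous g x) -> 0 < e ->
  exists delta, 0 < delta /\ forall d, d < delta -> forall x y, lo <= x <= hi -> lo <= y <= hi ->
    Rabs (x - y) <= d -> Rabs (g x - g y) <= e.
Proof.
  intros Hg He.
  assert (HUC : uniform_continuity g (fun c => lo <= c <= hi)).
  { apply Heine; [apply compact_P3 | intros; apply continuity_pt_filterlim, Hg]. }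
  destruct (HUC (mkposreal e He)) as [delta Hdelta].
  exists delta. split; [apply cond_pos|]. intros d Hd x y Hx Hy Hxy.
  left. apply Hdelta; auto. lra.
Qed.

Definition clamp (a b x : R) : R := Rmax a (Rmin b x).

(* [f] frozen outside [a, b]: continuous on all of [R] and equal to [f] on [a, b]. *)
Definition clamped (f : R -> R) (a b x : R) : R := f (clamp a b x).

Lemma clamp_in a b x : a <= b -> a <= clamp a b x <= b.
Proof. intros. unfold clamp, Rmax, Rmin. repeat destruct Rle_dec; lra. Qed.

Lemma clamp_id a b x : a <= x <= b -> clamp a b x = x.
Proof. intros. unfold clamp, Rmax, Rmin. repeat destruct Rle_dec; lra. Qed.

Lemma clamp_lipschitz a b x y : a <= b -> Rabs (clamp a b x - clamp a b y) <= Rabs (x - y).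
Proof.
  intros. unfold clamp, Rmax, Rmin, Rabs.
  repeat destruct Rle_dec; repeat destruct Rcase_abs; lra.
Qed.

Lemma at_right_0_intro (P : R -> Prop) d0 : 0 < d0 -> (forall d, 0 < d < d0 -> P d) ->
  at_right 0 P.
Proof.
  intros Hd0 H. exists (mkposreal d0 Hd0). intros y Hy Hpos. apply H.
  change (Rabs (y - 0) < d0) in Hy. rewrite Rminus_0_r in Hy. apply Rabs_def2 in Hy. lra.
Qed.

Lemma at_right_0_small c L : 0 < c -> at_right 0 (fun d => 0 < d < c /\ log2 d < L).
Proof.
  intros Hc. assert (H2L : 0 < Rpower 2 L) by apply exp_pos.
  apply at_right_0_intro with (Rmin c (Rpower 2 L)); [apply Rmin_glb_lt; auto|].
  intros d Hd. pose proof (Rmin_l c (Rpower 2 L)). pose proof (Rmin_r c (Rpower 2 L)).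
  split; [lra|]. rewrite <- (log2_Rpower L). apply log2_lt; lra.
Qed.

Lemma Rabs_ratio_lt x y c K eps : 0 < eps -> Rabs (x - c * y) <= K -> K / eps < Rabs y ->
  Rabs (x / y - c) < eps.
Proof.
  intros Heps Hx Hy. pose proof (Rabs_pos (x - c * y)).
  assert (HK : 0 <= K / eps) by (apply Rle_mult_inv_pos; lra).
  assert (Hy0 : y <> 0) by (intros ->; rewrite Rabs_R0 in Hy; lra).
  replace (x / y - c) with ((x - c * y) / y) by (field; auto).
  unfold Rdiv. rewrite Rabs_mult, Rabs_inv.
  apply Rmult_lt_reg_r with (Rabs y); [lra|].
  rewrite Rmult_assoc, Rinv_l by (apply Rabs_no_R0; auto).
  replace K with (K / eps * eps) in Hx by (field; lra). nra.
Qed.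

Section Density.
Variables (f : R -> R) (a b : R).
Hypotheses (Hpdf : is_pdf_with_support f a b) (HA : condition_A f a b).

Local Notation F := (clamped f a b).
Local Notation G := (fun x => xlnx (clamped f a b x)).

Lemma support_lt : a < b.
Proof. destruct Hpdf; lra. Qed.

Lemma clamped_eq x : a <= x <= b -> F x = f x.
Proof. intros. unfold clamped. rewrite clamp_id; auto. Qed.

Lemma clamped_nonneg x : 0 <= F x.
Proof. apply Hpdf. Qed.

Lemma clamped_continuous x : continuous F x.
Proof.
  pose proof support_lt. destruct HA as [Hc _].
  assert (Hcin : a <= clamp a b x <= b) by (apply clamp_in; lra).
  unfold continuous, clamped.
  eapply filterlim_comp; [|apply (Hc _ Hcin)].
  intros P [eps HP]. exists eps. intros y Hy. apply HP.
  - change (Rabs (clamp a b y - clamp a b x) < eps).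
    eapply Rle_lt_trans; [apply clamp_lipschitz; lra | apply Hy].
  - apply clamp_in; lra.
Qed.

Lemma xlnx_clamped_continuous x : continuous G x.
Proof. apply continuous_xlnx_comp; [apply clamped_nonneg | apply clamped_continuous]. Qed.

Lemma clamped_bounded : exists M, 1 <= M /\ forall x, F x <= M.
Proof.
  pose proof support_lt.
  assert (Hc : forall x, continuity_pt F x)
    by (intros; apply continuity_pt_filterlim, clamped_continuous).
  destruct (continuity_ab_maj F a b ltac:(lra) (fun c _ => Hc c)) as [xm [Hm _]].
  exists (Rmax 1 (F xm)). split; [apply Rmax_l|].
  intros x. unfold clamped at 1. rewrite <- (clamp_id a b (clamp a b x)) by (apply clamp_in; lra).
  eapply Rle_trans; [apply Hm, clamp_in; lra | apply Rmax_r].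
Qed.

Lemma diff_entropy_clamped : diff_entropy f a b = - (/ ln 2 * RInt G a b).
Proof.
  pose proof support_lt. pose proof ln2_pos. unfold diff_entropy. f_equal.
  rewrite <- RInt_scal_R by (apply ex_RInt_cont, xlnx_clamped_continuous).
  apply RInt_ext. rewrite Rmin_left, Rmax_right by lra. intros x Hx.
  unfold xlnx, log2. rewrite clamped_eq by lra.
  change (f x * (ln (f x) / ln 2) = / ln 2 * (f x * ln (f x))). field. lra.
Qed.

Section Quantizer.
Variable d : R.
Hypothesis Hd : 0 < d < b - a.

Local Notation N := (ncells a b d).
Local Notation p := (uni_prob f a b d).
Local Notation lo i := (cell_lo a d i).
Local Notation hi i := (cell_hi a b d i).

Lemma uni_prob_clamped i : (i < N)%nat -> p i = RInt F (lo i) (hi i).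
Proof. intros Hi. apply RInt_cell_ext; auto. intros. symmetry. apply clamped_eq; auto. Qed.

Lemma uni_prob_pos i : (i < N)%nat -> 0 < p i.
Proof.
  intros Hi. rewrite uni_prob_clamped by auto.
  destruct (cell_bounds a b d Hd i Hi) as [[H1 H2] [H3 H4]].
  destruct Hpdf as [_ [_ [_ [_ [_ Hsupp]]]]].
  destruct (Hsupp ((lo i + hi i) / 2) ltac:(lra) ((hi i - lo i) / 2) ltac:(lra)) as [y [Hy Hfy]].
  apply Rabs_def2 in Hy.
  apply (RInt_pos_of_pos_point _ (lo i) (hi i) y);
    [apply clamped_continuous | apply clamped_nonneg | lra |].
  rewrite clamped_eq; auto; lra.
Qed.

Lemma uni_prob_le M i : (forall x, F x <= M) -> (i < N)%nat -> p i <= M * d.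
Proof.
  intros HM Hi. rewrite uni_prob_clamped by auto.
  destruct (cell_bounds a b d Hd i Hi) as [[H1 H2] [H3 H4]].
  assert (0 <= M) by (pose proof (HM a); pose proof (clamped_nonneg a); lra).
  apply Rle_trans with (RInt (fun _ => M) (lo i) (hi i)).
  - apply RInt_le; [lra | apply ex_RInt_cont, clamped_continuous | apply ex_RInt_const |].
    intros; apply HM.
  - rewrite RInt_const_R. nra.
Qed.

Lemma uni_prob_sum : fsum N p = 1.
Proof.
  rewrite (fsum_ext _ _ (fun i => RInt F (lo i) (hi i))) by (intros; apply uni_prob_clamped; auto).
  rewrite RInt_cells by (auto; intros; apply ex_RInt_cont, clamped_continuous).
  destruct Hpdf as [_ [_ [_ [_ [<- _]]]]].
  apply RInt_ext. pose proof support_lt. rewrite Rmin_left, Rmax_right by lra.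
  intros x Hx. rewrite clamped_eq; auto; lra.
Qed.

Lemma uni_prob_inner i : (S i < N)%nat ->
  exists xi, lo i <= xi <= lo i + d /\ p i = d * F xi.
Proof.
  intros Hi. rewrite uni_prob_clamped, cell_hi_inner by (auto; lia).
  destruct (RInt_mean_value F (lo i) (lo i + d) clamped_continuous ltac:(lra)) as [xi [Hxi ->]].
  exists xi. split; auto. f_equal. ring.
Qed.

Lemma cell_xlnx_error_inner e i :
  (forall x y, a <= x <= b -> a <= y <= b -> Rabs (x - y) <= d -> Rabs (G x - G y) <= e) ->
  (S i < N)%nat -> Rabs (p i * ln (p i / d) - RInt G (lo i) (hi i)) <= d * e.
Proof.
  intros Hmod Hi. destruct (uni_prob_inner i Hi) as [xi [Hxi ->]].
  destruct (cell_bounds a b d Hd i ltac:(lia)) as [[H1 H2] [H3 H4]].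
  rewrite cell_hi_inner in * by auto.
  replace (d * F xi * ln (d * F xi / d)) with ((lo i + d - lo i) * G xi)
    by (unfold xlnx; replace (d * F xi / d) with (F xi) by (field; lra); ring).
  rewrite <- RInt_const_R.
  assert (Hex : ex_RInt G (lo i) (lo i + d)) by (apply ex_RInt_cont, xlnx_clamped_continuous).
  rewrite <- (RInt_minus (fun _ => G xi) G) by (auto; apply ex_RInt_const).
  replace (d * e) with ((lo i + d - lo i) * e) by ring.
  apply abs_RInt_le_const; [lra | apply ex_RInt_minus; auto; apply ex_RInt_const |].
  intros t Ht. apply Hmod; try lra. apply Rabs_le. lra.
Qed.

Lemma cell_xlnx_error M i : (forall x, F x <= M) -> 1 <= M -> (i < N)%nat ->
  Rabs (p i * ln (p i / d) - RInt G (lo i) (hi i)) <= 2 * d * (1 + M ^ 2).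
Proof.
  intros HM HM1 Hi. destruct (cell_bounds a b d Hd i Hi) as [[H1 H2] [H3 H4]].
  pose proof (uni_prob_pos i Hi). pose proof (uni_prob_le M i HM Hi).
  assert (Hp : Rabs (p i * ln (p i / d)) <= d * (1 + M ^ 2)).
  { replace (p i * ln (p i / d)) with (d * xlnx (p i / d)) by (unfold xlnx; field; lra).
    rewrite Rabs_mult, Rabs_pos_eq by lra. apply Rmult_le_compat_l; [lra|].
    apply Rabs_xlnx_le; auto. split; [apply Rle_mult_inv_pos; lra|].
    apply Rmult_le_reg_r with d; [lra|]. unfold Rdiv. rewrite Rmult_assoc, Rinv_l; lra. }
  assert (HG : Rabs (RInt G (lo i) (hi i)) <= d * (1 + M ^ 2)).
  { eapply Rle_trans.
    - apply (abs_RInt_le_const _ _ _ (1 + M ^ 2)); [lra | apply ex_RInt_cont, xlnx_clamped_continuous |].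
      intros; apply Rabs_xlnx_le; auto. split; [apply clamped_nonneg | apply HM].
    - apply Rmult_le_compat_r; [nra | lra]. }
  eapply Rle_trans; [apply Rabs_triang|]. rewrite Rabs_Ropp. lra.
Qed.

Lemma log_density_moment2_le M : (forall x, F x <= M) -> 1 <= M ->
  log_density_moment2 N p d <= 2 * (b - a) * ((4 + M ^ 3) / ln 2 ^ 2).
Proof.
  intros HM HM1. pose proof ln2_pos. destruct (ncells_spec a b d Hd) as [_ [Hn _]].
  set (K := (4 + M ^ 3) / ln 2 ^ 2).
  assert (HK : 0 <= K) by (unfold K; apply Rle_mult_inv_pos; nra).
  apply Rle_trans with (fsum N (fun _ => d * K)).
  - apply fsum_le. intros i Hi.
    pose proof (uni_prob_pos i Hi). pose proof (uni_prob_le M i HM Hi).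
    assert (Hu : 0 < p i / d <= M).
    { split; [apply Rdiv_lt_0_compat; lra|].
      apply Rmult_le_reg_r with d; [lra|]. unfold Rdiv. rewrite Rmult_assoc, Rinv_l; lra. }
    pose proof (x_ln_sq_le (p i / d) M Hu HM1).
    replace (p i * log2 (p i / d) ^ 2) with (d * (p i / d * ln (p i / d) ^ 2) / ln 2 ^ 2)
      by (unfold log2; field; lra).
    unfold K, Rdiv. rewrite Rmult_assoc. apply Rmult_le_compat_l; [lra|].
    apply Rmult_le_compat_r; [left; apply Rinv_0_lt_compat; nra | lra].
  - rewrite fsum_const. nra.
Qed.

Lemma uni_distortion_le : uni_distortion f a b d <= d ^ 2 / 4.
Proof.
  unfold uni_distortion.
  apply Rle_trans with (fsum N (fun i => d ^ 2 / 4 * p i)).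
  - apply fsum_le. intros i Hi. rewrite uni_prob_clamped by auto.
    rewrite (RInt_cell_ext a b d Hd _ (fun x => (x - cell_mid a b d i) ^ 2 * F x))
      by (auto; intros; rewrite clamped_eq; auto).
    destruct (cell_bounds a b d Hd i Hi) as [[H1 H2] [H3 H4]].
    rewrite <- RInt_scal_R by (apply ex_RInt_cont, clamped_continuous).
    apply RInt_le; [lra | | |].
    + apply ex_RInt_cont. intros. apply continuous_sq_shift_mult, clamped_continuous.
    + apply ex_RInt_cont. intros. apply (continuous_mult (fun _ => _) F);
        [apply continuous_const | apply clamped_continuous].
    + intros x Hx. apply Rmult_le_compat_r; [apply clamped_nonneg|]. unfold cell_mid. nra.
  - rewrite fsum_scal, uni_prob_sum. lra.
Qed.

(* The variance of the uniform law on a cell of length [d] is [d^2 / 12]. *)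
Lemma cell_distortion_inner_ge e i :
  (forall x y, a <= x <= b -> a <= y <= b -> Rabs (x - y) <= d -> Rabs (F x - F y) <= e) ->
  (S i < N)%nat -> d ^ 2 / 12 * p i - d ^ 3 / 12 * e <=
  RInt (fun x => (x - cell_mid a b d i) ^ 2 * f x) (lo i) (hi i).
Proof.
  intros Hmod Hi.
  rewrite (RInt_cell_ext a b d Hd _ (fun x => (x - cell_mid a b d i) ^ 2 * F x))
    by (try lia; intros; rewrite clamped_eq; auto).
  destruct (uni_prob_inner i Hi) as [xi [Hxi ->]].
  destruct (cell_bounds a b d Hd i ltac:(lia)) as [[H1 H2] [H3 H4]].
  unfold cell_mid. rewrite cell_hi_inner in * by auto.
  set (m := (lo i + (lo i + d)) / 2). set (c := F xi - e).
  apply Rle_trans with (RInt (fun x => c * (x - m) ^ 2) (lo i) (lo i + d)).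
  - rewrite RInt_scal_R, RInt_sq_shift by (apply ex_RInt_cont, continuous_sq_shift).
    unfold m, c. right. field.
  - apply RInt_le; [lra | | |].
    + apply ex_RInt_cont. intros. apply (continuous_mult (fun _ => c) (fun x => (x - m) ^ 2));
        [apply continuous_const | apply continuous_sq_shift].
    + apply ex_RInt_cont. intros. apply continuous_sq_shift_mult, clamped_continuous.
    + intros x Hx. rewrite Rmult_comm. apply Rmult_le_compat_l; [apply pow2_ge_0|].
      assert (Rabs (F xi - F x) <= e) by (apply Hmod; try lra; apply Rabs_le; lra).
      apply Rabs_le_between in H. unfold c. lra.
Qed.

Lemma cell_distortion_nonneg i : (i < N)%nat ->
  0 <= RInt (fun x => (x - cell_mid a b d i) ^ 2 * f x) (lo i) (hi i).
Proof.
  intros Hi. destruct (cell_bounds a b d Hd i Hi) as [[H1 H2] _].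
  rewrite (RInt_cell_ext a b d Hd _ (fun x => (x - cell_mid a b d i) ^ 2 * F x))
    by (auto; intros; rewrite clamped_eq; auto).
  apply RInt_ge_0; [lra | apply ex_RInt_cont; intros; apply continuous_sq_shift_mult, clamped_continuous |].
  intros. apply Rmult_le_pos; [apply pow2_ge_0 | apply clamped_nonneg].
Qed.

End Quantizer.

Lemma xlnx_riemann_sum_close eps : 0 < eps -> exists d0, 0 < d0 /\ forall d, 0 < d < d0 ->
  d < b - a -> Rabs (fsum (ncells a b d) (fun i => uni_prob f a b d i * ln (uni_prob f a b d i / d))
                     - RInt G a b) <= eps.
Proof.
  intros Heps. pose proof support_lt. destruct clamped_bounded as [M [HM1 HM]].
  set (C := 1 + M ^ 2). assert (HC : 0 < C) by (unfold C; nra).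
  set (e := eps / (2 * (b - a))). assert (He : 0 < e) by (apply Rdiv_lt_0_compat; lra).
  destruct (continuous_unif_modulus G a b e xlnx_clamped_continuous He) as [delta [Hdelta Hmod]].
  exists (Rmin delta (eps / (4 * C))). split; [apply Rmin_glb_lt; auto; apply Rdiv_lt_0_compat; lra|].
  intros d Hd Hdb.
  pose proof (Rmin_l delta (eps / (4 * C))). pose proof (Rmin_r delta (eps / (4 * C))).
  assert (Hd' : 0 < d < b - a) by lra.
  assert (HdC : 2 * d * C <= eps / 2).
  { replace (eps / 2) with (2 * C * (eps / (4 * C))) by (field; lra). nra. }
  destruct (ncells_spec a b d Hd') as [HN [Hn _]].
  rewrite <- (RInt_cells a b d Hd' G) by (intros; apply ex_RInt_cont, xlnx_clamped_continuous).
  rewrite <- fsum_minus.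
  destruct (ncells a b d) as [|n] eqn:EN; [lia|]. rewrite fsum_S. rewrite S_INR in Hn.
  assert (Hinner : Rabs (fsum n (fun i => uni_prob f a b d i * ln (uni_prob f a b d i / d)
                                - RInt G (cell_lo a d i) (cell_hi a b d i))) <= eps / 2).
  { eapply Rle_trans; [apply fsum_abs|].
    eapply Rle_trans; [apply (fsum_le _ _ (fun _ => d * e))|].
    - intros i Hi. apply cell_xlnx_error_inner; auto; [|rewrite EN; lia].
      intros. apply Hmod with d; auto. lra.
    - rewrite fsum_const. replace (eps / 2) with ((b - a) * e) by (unfold e; field; lra).
      rewrite <- Rmult_assoc. apply Rmult_le_compat_r; lra. }
  pose proof (cell_xlnx_error d Hd' M n HM HM1 ltac:(rewrite EN; lia)).
  eapply Rle_trans; [apply Rabs_triang|]. fold C in H2. lra.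
Qed.

Lemma log_density_mean_cvg : filterlim
  (fun d => log_density_mean (ncells a b d) (uni_prob f a b d) d) (at_right 0)
  (locally (- diff_entropy f a b)).
Proof.
  pose proof support_lt. pose proof ln2_pos. apply filterlim_locally. intros eps.
  destruct (xlnx_riemann_sum_close (ln 2 * eps / 2)) as [d0 [Hd0 Hclose]].
  { pose proof (cond_pos eps). nra. }
  apply at_right_0_intro with (Rmin d0 (b - a)); [apply Rmin_glb_lt; lra|].
  intros d Hd. pose proof (Rmin_l d0 (b - a)). pose proof (Rmin_r d0 (b - a)).
  specialize (Hclose d ltac:(lra) ltac:(lra)).
  change (Rabs (log_density_mean (ncells a b d) (uni_prob f a b d) d - - diff_entropy f a b) < eps).
  rewrite diff_entropy_clamped, Ropp_involutive.
  unfold log_density_mean. unfold log2. unfold Rdiv at 2.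
  rewrite (fsum_ext _ _ (fun i => / ln 2 * (uni_prob f a b d i * ln (uni_prob f a b d i / d))))
    by (intros; unfold Rdiv; ring).
  rewrite fsum_scal, <- Rmult_minus_distr_l, Rabs_mult, Rabs_pos_eq
    by (left; apply Rinv_0_lt_compat; lra).
  apply Rmult_lt_reg_l with (ln 2); auto.
  rewrite <- Rmult_assoc, Rinv_r, Rmult_1_l by lra.
  pose proof (cond_pos eps). nra.
Qed.

Lemma log_density_moment2_bounded : exists B, 0 < B /\ forall d, 0 < d < b - a ->
  log_density_moment2 (ncells a b d) (uni_prob f a b d) d <= B.
Proof.
  pose proof support_lt. pose proof ln2_pos. destruct clamped_bounded as [M [HM1 HM]].
  exists (2 * (b - a) * ((4 + M ^ 3) / ln 2 ^ 2)). split.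
  - apply Rmult_lt_0_compat; [lra|]. apply Rdiv_lt_0_compat; [nra | apply pow_lt; lra].
  - intros d Hd. apply log_density_moment2_le; auto.
Qed.

Lemma uni_distortion_ge : at_right 0 (fun d => d ^ 2 / 32 <= uni_distortion f a b d).
Proof.
  pose proof support_lt. destruct clamped_bounded as [M [HM1 HM]].
  set (e := / (4 * (b - a))). assert (He : 0 < e) by (apply Rinv_0_lt_compat; lra).
  destruct (continuous_unif_modulus F a b e clamped_continuous He) as [delta [Hdelta Hmod]].
  set (d0 := Rmin delta (Rmin (/ (4 * M)) (b - a))).
  assert (Hd0 : 0 < d0).
  { repeat apply Rmin_glb_lt; try lra. apply Rinv_0_lt_compat; lra. }
  apply at_right_0_intro with d0; auto. intros d Hd. unfold d0 in Hd.
  pose proof (Rmin_l delta (Rmin (/ (4 * M)) (b - a))).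
  pose proof (Rmin_r delta (Rmin (/ (4 * M)) (b - a))).
  pose proof (Rmin_l (/ (4 * M)) (b - a)). pose proof (Rmin_r (/ (4 * M)) (b - a)).
  assert (Hd' : 0 < d < b - a) by lra.
  assert (HMd : M * d <= / 4).
  { replace (/ 4) with (M * / (4 * M)) by (field; lra). apply Rmult_le_compat_l; lra. }
  destruct (ncells_spec a b d Hd') as [HN [Hn _]].
  pose proof (uni_prob_sum d Hd') as Hsum. unfold uni_distortion.
  destruct (ncells a b d) as [|n] eqn:EN; [lia|]. rewrite S_INR in Hn.
  rewrite fsum_S. rewrite fsum_S in Hsum.
  pose proof (cell_distortion_nonneg d Hd' n ltac:(rewrite EN; lia)).
  pose proof (uni_prob_le d Hd' M n HM ltac:(rewrite EN; lia)).
  assert (Hinner : fsum n (fun i => d ^ 2 / 12 * uni_prob f a b d i - d ^ 3 / 12 * e) <=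
    fsum n (fun i => RInt (fun x => (x - cell_mid a b d i) ^ 2 * f x)
                          (cell_lo a d i) (cell_hi a b d i))).
  { apply fsum_le. intros i Hi. apply cell_distortion_inner_ge; [lra | | rewrite EN; lia].
    intros. apply Hmod with d; auto. lra. }
  rewrite fsum_minus, fsum_scal, fsum_const in Hinner.
  assert (Hne : INR n * (d ^ 3 / 12 * e) <= d ^ 2 / 48).
  { unfold e. replace (INR n * (d ^ 3 / 12 * / (4 * (b - a))))
      with ((INR n * d) / (b - a) * (d ^ 2 / 48)) by (field; lra).
    rewrite <- (Rmult_1_l (d ^ 2 / 48)) at 2. apply Rmult_le_compat_r; [nra|].
    apply Rmult_le_reg_r with (b - a); [lra|]. unfold Rdiv. rewrite Rmult_assoc, Rinv_l; lra. }
  nra.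
Qed.

Lemma AoI_uni_opt_entropy_limit : filterlim (fun d => AoI_uni_opt f a b d + 3 / 2 * log2 d)
  (at_right 0) (locally (3 / 2 * diff_entropy f a b)).
Proof.
  pose proof support_lt as Hab. set (h := diff_entropy f a b).
  destruct log_density_moment2_bounded as [B [HB HBd]].
  apply filterlim_locally. intros eps. pose proof (cond_pos eps) as Heps.
  assert (He1 : 0 < Rmin 1 (eps / 4)) by (apply Rmin_glb_lt; lra).
  pose proof (proj1 (filterlim_locally _ _) log_density_mean_cvg (mkposreal _ He1)) as Hmean.
  generalize (filter_and _ _ Hmean (at_right_0_small (b - a) (- (B / eps + Rabs h + 1))
    ltac:(lra))).
  apply filter_imp. intros d [Hm [Hd Hl]].
  change (Rabs (log_density_mean (ncells a b d) (uni_prob f a b d) d - - h)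
    < Rmin 1 (eps / 4)) in Hm.
  change (Rabs (AoI_uni_opt f a b d + 3 / 2 * log2 d - 3 / 2 * h) < eps).
  destruct (ncells_spec a b d Hd) as [HN _].
  assert (Hp : forall i, (i < ncells a b d)%nat -> 0 < uni_prob f a b d i)
    by (intros; apply uni_prob_pos; auto).
  pose proof (uni_prob_sum d Hd) as Hs.
  destruct (AoI_opt_rescaled_bounds _ _ HN Hp Hs d (proj1 Hd)) as [Hlo Hhi].
  pose proof (entropy2_rescale _ _ Hp Hs d (proj1 Hd)) as HH.
  pose proof (HBd d Hd) as HBd'. unfold AoI_uni_opt.
  set (A := log_density_mean (ncells a b d) (uni_prob f a b d) d) in *.
  set (H := entropy2 (ncells a b d) (uni_prob f a b d)) in *.
  set (Bd := log_density_moment2 (ncells a b d) (uni_prob f a b d) d) in *.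
  apply Rabs_def2 in Hm. pose proof (Rmin_l 1 (eps / 4)). pose proof (Rmin_r 1 (eps / 4)).
  pose proof (Rle_abs h). pose proof (Rle_abs (- h)). rewrite Rabs_Ropp in *.
  assert (HBH : B < eps * H).
  { replace B with (eps * (B / eps)) by (field; lra). apply Rmult_lt_compat_l; lra. }
  assert (Hr : Bd / (2 * H) < eps / 2).
  { replace (eps / 2) with (eps * H / (2 * H)) by (field; nra).
    apply Rmult_lt_compat_r; [apply Rinv_0_lt_compat; nra | lra]. }
  apply Rabs_def1; lra.
Qed.

Lemma AoI_uni_opt_distortion_limit : filterlim
  (fun d => AoI_uni_opt f a b d / log2 (uni_distortion f a b d)) (at_right 0) (locally (- 3 / 4)).
Proof.
  pose proof support_lt. set (h := diff_entropy f a b). set (K := Rabs (3 / 2 * h) + 5).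
  assert (HK : 0 < K) by (pose proof (Rabs_pos (3 / 2 * h)); unfold K; lra).
  apply filterlim_locally. intros eps. pose proof (cond_pos eps) as Heps.
  pose proof (proj1 (filterlim_locally _ _) AoI_uni_opt_entropy_limit (mkposreal 1 Rlt_0_1)) as HT.
  generalize (filter_and _ _ HT (filter_and _ _ uni_distortion_ge
    (at_right_0_small (b - a) (- (K / eps) / 2) ltac:(lra)))).
  apply filter_imp. intros d [HTd [HDge [Hd Hl]]].
  change (Rabs (AoI_uni_opt f a b d + 3 / 2 * log2 d - 3 / 2 * h) < 1) in HTd.
  change (Rabs (AoI_uni_opt f a b d / log2 (uni_distortion f a b d) - - 3 / 4) < eps).
  pose proof (uni_distortion_le d Hd) as HDle.
  assert (HY1 : 2 * log2 d - 5 <= log2 (uni_distortion f a b d)).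
  { replace (2 * log2 d - 5) with (log2 (d ^ 2 / 2 ^ 5))
      by (rewrite log2_sq_div_pow2 by lra; simpl; ring).
    apply log2_le; [apply Rdiv_lt_0_compat; [nra | lra] | simpl; lra]. }
  assert (HY2 : log2 (uni_distortion f a b d) <= 2 * log2 d - 2).
  { replace (2 * log2 d - 2) with (log2 (d ^ 2 / 2 ^ 2))
      by (rewrite log2_sq_div_pow2 by lra; simpl; ring).
    apply log2_le; [nra | simpl; lra]. }
  apply Rabs_ratio_lt with K; auto.
  - apply Rabs_le. apply Rabs_def2 in HTd.
    pose proof (Rle_abs (3 / 2 * h)). pose proof (Rle_abs (- (3 / 2 * h))).
    rewrite Rabs_Ropp in *. unfold K. lra.
  - assert (0 < K / eps) by (apply Rdiv_lt_0_compat; lra).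
    rewrite Rabs_left by lra. lra.
Qed.

End Density.

Theorem theorem2 (f : R -> R) (a b : R) :
  is_pdf_with_support f a b ->
  condition_A f a b ->
  condition_B f a b ->
  filterlim (fun d => AoI_uni_opt f a b d / log2 (uni_distortion f a b d))
    (at_right 0) (locally (- 3 / 4)) /\
  filterlim (fun d => AoI_uni_opt f a b d + 3 / 2 * log2 d)
    (at_right 0) (locally (3 / 2 * diff_entropy f a b)).
Proof.
  intros Hpdf HA _. split.
  - apply AoI_uni_opt_distortion_limit; auto.
  - apply AoI_uni_opt_entropy_limit; auto.
Qed.
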